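(* Let $V$ be a simple Yetter-Drinfeld module over $H=B(n,w,\gamma)$ with $\dim_\Bbbk V=p+1$ for some $p\ge0$, and let $v\in V$ be a standard element of type $(\alpha,\beta,h)$ with $\alpha,\beta\in\Bbbk^*$, $h\in G(H)$. Then: (1) $p+1\le n$; (2) if $p+1<n$, then $y^{p+1}\cdot v=0$; (3) $y^{p+1}\cdot v=0$ if and only if $\alpha^w=\beta^n=1$; (4) $y^{p+1}\cdot v\ne0$ if and only if $\alpha^w=\beta^n\ne1$.
   Context: $\Bbbk$ is an algebraically closed field of characteristic $0$; $n,w$ positive integers, $\gamma$ a primitive $n$-th root of unity. $H=B(n,w,\gamma)$ is the Hopf algebra generated by $x^{\pm1},g,y$ with relations $xx^{-1}=x^{-1}x=1$, $xg=gx$, $xy=yx$, $yg=\gamma gy$, $y^n=1-x^w=1-g^n$, with $\Delta(x)=x\otimes x$, $\Delta(g)=g\otimes g$, $\Delta(y)=y\otimes g+1\otimes y$, $\varepsilon(x)=\varepsilon(g)=1$, $\varepsilon(y)=0$, $S(x)=x^{-1}$, $S(g)=g^{-1}$, $S(y)=-yg^{-1}$; $G(H)=\{g^jx^k\}$. A (left-left) Yetter-Drinfeld module is a left $H$-module, left $H$-comodule $(V,\cdot,\delta)$ with $\delta(h\cdot v)=h_{(1)}v_{(-1)}S(h_{(3)})\otimes h_{(2)}\cdot v_{(0)}$; simple means no nonzero proper Yetter-Drinfeld submodules. A nonzero $v\in V$ is a standard element of type $(\alpha,\beta,h)$ if $h\in G(H)$, $\alpha,\beta\in\Bbbk^*$,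 $x\cdot v=\alpha v$, $g\cdot v=\beta v$, $\delta(v)=h\otimes v$. *)

From HB Require Import structures.
From mathcomp Require Import all_boot all_order all_algebra.
Set Implicit Arguments. Unset Strict Implicit. Unset Printing Implicit Defensive.
Import Order.TTheory GRing.Theory Num.Theory.
Local Open Scope ring_scope.

(* The Hopf algebra H = B(n,w,gamma), encoded through its PBW-type basis    *)
(*   x^k g^j y^i   (k : int, 0 <= j < n, 0 <= i < n).                       *)
(* An index triple (k, j, i) : idx (with arbitrary j i : nat) stands for the *)
(* element x^k g^j y^i of H; elements of H are finite formal combinations   *)
(* seq (K * idx); all products are computed with the exact multiplication  *)
(* rule of H and always return reduced indices (j < n, i < n).             *)

Definition idx := (int * nat * nat)%type.

Section BHopf.
Variables (K : fieldType) (n w : nat) (gam : K).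

Definition Hel := seq (K * idx).

(* x^k g^j y^i * x^k' g^j' y^i' = gam^(i j') x^(k+k') g^(j+j') y^(i+i'),
   then g^(n q + r) = x^(w q) g^r and y^(n m + s) = (1 - x^w)^m y^s.      *)
Definition mulB (a b : idx) : Hel :=
  let: (k, j, i) := a in let: (k', j', i') := b in
  let J := (j + j')%N in let I := (i + i')%N in let m := (I %/ n)%N in
  [seq (gam ^+ (i * j') * ('C(m, t))%:R * (-1) ^+ t,
        (k + k' + ((w * (J %/ n))%N)%:Z + ((w * t)%N)%:Z, (J %% n)%N, (I %% n)%N))
  | t <- iota 0 m.+1].

Definition nf (b : idx) : Hel := mulB b (0, 0%N, 0%N).

Definition mulH (h h' : Hel) : Hel :=
  flatten [seq [seq (p.1 * q.1 * r.1, r.2) | r <- mulB p.2 q.2] | p <- h, q <- h'].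

Definition oneH : Hel := [:: (1, (0, 0%N, 0%N))].
Definition powH (h : Hel) (m : nat) : Hel := iter m (mulH h) oneH.

(* elements of H (x) H *)
Definition HHel := seq (K * (idx * idx)).
Definition mulHH (t t' : HHel) : HHel :=
  flatten [seq [seq (p.1 * q.1 * r1.1 * r2.1, (r1.2, r2.2))
               | r1 <- mulB p.2.1 q.2.1, r2 <- mulB p.2.2 q.2.2] | p <- t, q <- t'].
Definition oneHH : HHel := [:: (1, ((0, 0%N, 0%N), (0, 0%N, 0%N)))].
Definition powHH (t : HHel) (m : nat) : HHel := iter m (mulHH t) oneHH.

(* coproduct: Delta(x) = x(x)x, Delta(g) = g(x)g, Delta(y) = y(x)g + 1(x)y,
   extended multiplicatively: Delta(x^k g^j y^i) = Delta(x)^k Delta(g)^j Delta(y)^i *)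
Definition DeltaB (b : idx) : HHel :=
  let: (k, j, i) := b in
  mulHH [:: (1, ((k, 0%N, 0%N), (k, 0%N, 0%N)))]
    (mulHH (powHH [:: (1, ((0, 1%N, 0%N), (0, 1%N, 0%N)))] j)
           (powHH [:: (1, ((0, 0%N, 1%N), (0, 1%N, 0%N)));
                      (1, ((0, 0%N, 0%N), (0, 0%N, 1%N)))] i)).

(* (Delta (x) id) Delta on a basis element: terms h1 (x) h2 (x) h3 *)
Definition Delta2B (b : idx) : seq (K * (idx * idx * idx)) :=
  flatten [seq [seq (p.1 * r.1, (r.2.1, r.2.2, p.2.2)) | r <- DeltaB p.2.1]
          | p <- DeltaB b].

Definition Delta2H (h : Hel) : seq (K * (idx * idx * idx)) :=
  flatten [seq [seq (p.1 * r.1, r.2) | r <- Delta2B p.2] | p <- h].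

(* counit: eps(x) = eps(g) = 1, eps(y) = 0 *)
Definition epsB (b : idx) : K := (b.2 == 0%N)%:R.

(* antipode: S(x) = x^-1, S(g) = g^-1 = g^(n-1) x^(-w), S(y) = - y g^-1,
   extended anti-multiplicatively: S(x^k g^j y^i) = S(y)^i S(g)^j S(x)^k *)
Definition ginvH : Hel := [:: (1, (- (w%:Z), (n.-1)%N, 0%N))].
Definition SyH : Hel := mulH [:: (-1, (0, 0%N, 1%N))] ginvH.
Definition SB (b : idx) : Hel :=
  let: (k, j, i) := b in
  mulH (powH SyH i) (mulH (powH ginvH j) [:: (1, (- k, 0%N, 0%N))]).

(* The H-module structure is given by the actions X, Xi (= x^-1), G, Y of   *)
(* the generators, subject to the defining relations of H.  The comodule    *)
(* structure is a map delta : V -> H (x) V, an element of H (x) V being a   *)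
(* finite formal sum  seq (idx * V)  of  b (x) v.                          *)

Variable V : vectType K.

Definition Xpow (X Xi : V -> V) (k : int) : V -> V :=
  match k with Posz m => iter m X | Negz m => iter m.+1 Xi end.

Definition rhoB (X Xi G Y : V -> V) (b : idx) (v : V) : V :=
  let: (k, j, i) := b in Xpow X Xi k (iter j G (iter i Y v)).

Definition rhoH (X Xi G Y : V -> V) (h : Hel) (v : V) : V :=
  \sum_(p <- h) p.1 *: rhoB X Xi G Y p.2 v.

Definition is_Hmodule (X Xi G Y : {linear V -> V}) : Prop :=
  (forall v, X (Xi v) = v) /\ (forall v, Xi (X v) = v) /\
  (forall v, X (G v) = G (X v)) /\ (forall v, X (Y v) = Y (X v)) /\
  (forall v, Y (G v) = gam *: G (Y v)) /\
  (forall v, iter n Y v = v - iter w X v) /\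
  (forall v, iter w X v = iter n G v).

(* coefficient (in V) of the basis element b in a formal tensor of H (x) V *)
Definition tc (t : seq (idx * V)) (b : idx) : V :=
  \sum_(q <- t) \sum_(r <- nf q.1 | r.2 == b) r.1 *: q.2.

(* coefficient of b1 (x) b2 in a formal tensor of H (x) H (x) V *)
Definition tc2 (t : seq ((idx * idx) * V)) (b1 b2 : idx) : V :=
  \sum_(q <- t) \sum_(r1 <- nf q.1.1) \sum_(r2 <- nf q.1.2 | (r1.2 == b1) && (r2.2 == b2))
     (r1.1 * r2.1) *: q.2.

Definition DeltaId (t : seq (idx * V)) : seq ((idx * idx) * V) :=
  flatten [seq [seq (r.2, r.1 *: q.2) | r <- DeltaB q.1] | q <- t].

Definition IdDelta (delta : V -> seq (idx * V)) (t : seq (idx * V))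
  : seq ((idx * idx) * V) :=
  flatten [seq [seq ((q.1, s.1), s.2) | s <- delta q.2] | q <- t].

Definition is_Hcomodule (delta : V -> seq (idx * V)) : Prop :=
  [/\ (forall (a : K) (u v : V) b,
         tc (delta (a *: u + v)) b = a *: tc (delta u) b + tc (delta v) b),
      (forall v b1 b2, tc2 (DeltaId (delta v)) b1 b2 = tc2 (IdDelta delta (delta v)) b1 b2)
    & (forall v, \sum_(q <- delta v) epsB q.1 *: q.2 = v)].

(* h_(1) v_(-1) S(h_(3)) (x) h_(2) . v_(0) *)
Definition YD_rhs (X Xi G Y : V -> V) (delta : V -> seq (idx * V)) (h : Hel) (v : V)
  : seq (idx * V) :=
  flatten [seq [seq (r.2, (q.1 * r.1) *: rhoB X Xi G Y q.2.1.2 s.2)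
               | r <- mulH (mulH [:: (1, q.2.1.1)] [:: (1, s.1)]) (SB q.2.2)]
          | q <- Delta2H h, s <- delta v].

Definition is_YD (X Xi G Y : {linear V -> V}) (delta : V -> seq (idx * V)) : Prop :=
  [/\ is_Hmodule X Xi G Y, is_Hcomodule delta
    & forall (h : Hel) (v : V) (b : idx),
        tc (delta (rhoH X Xi G Y h v)) b = tc (YD_rhs X Xi G Y delta h v) b].

Definition YD_simple (X Xi G Y : {linear V -> V}) (delta : V -> seq (idx * V)) : Prop :=
  forall U : {vspace V},
    (forall b u, u \in U -> rhoB X Xi G Y b u \in U) ->
    (forall u b, u \in U -> tc (delta u) b \in U) ->
    U = 0%VS \/ U = fullv.

(* standard element of type (alpha, beta, h) with h = g^j x^k in G(H) *)
Definition standard (X Xi G Y : {linear V -> V}) (delta : V -> seq (idx * V))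
  (v : V) (alpha beta : K) (k : int) (j : nat) : Prop :=
  [/\ v != 0 /\ alpha != 0 /\ beta != 0 /\ (j < n)%N,
      X v = alpha *: v, G v = beta *: v
    & forall b, tc (delta v) b = if b == (k, j, 0%N) then v else 0].

End BHopf.

From HB Require Import structures.
From mathcomp Require Import all_boot all_order all_algebra.
From mathcomp Require Import zify ring.
Import GRing.Theory.
Local Open Scope ring_scope.

Set Implicit Arguments. Unset Strict Implicit. Unset Printing Implicit Defensive.

(* The span U of v, y.v, ..., y^(n-1).v is stable under x, x^-1, g and y
   (because y^n.v = (1 - alpha^w) v) and, by the Yetter-Drinfeld compatibility,
   under the coaction; by simplicity U = V, so dim V <= n.  The y^l.v are
   g-eigenvectors for the pairwise distinct eigenvalues beta gamma^-l, so the
   nonzero ones among them are linearly independent.  Finally x^w = g^n gives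
   alpha^w = beta^n; if alpha^w = 1 some y^l.v with l <= dim V vanishes, and
   otherwise none does and dim V = n. *)

Section BinomialSums.
Variable R : pzSemiRingType.

Definition binsum (m : nat) (psi : nat -> R) := \sum_(s < m.+1) 'C(m, s)%:R * psi s.

Lemma binsumS m psi : binsum m.+1 psi = binsum m psi + binsum m (fun s => psi s.+1).
Proof.
rewrite /binsum big_ord_recl.
under eq_bigr do rewrite lift0 binS natrD mulrDl.
rewrite big_split /= addrA; congr (_ + _).
rewrite big_ord_recr /= (bin_small (ltnSn m)) mul0r addr0 [RHS]big_ord_recl !bin0.
by congr (_ + _); apply: eq_bigr => i _; rewrite lift0.
Qed.

Lemma binsum_add m1 m2 psi :
  binsum m1 (fun t => binsum m2 (fun u => psi (t + u)%N)) = binsum (m1 + m2) psi.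
Proof.
elim: m1 psi => [|m1 IH] psi; first by rewrite /binsum big_ord_recl big_ord0 addr0 bin0 mul1r.
by rewrite binsumS addSn binsumS -IH -(IH (fun s => psi s.+1)).
Qed.

End BinomialSums.

Lemma big_iota0 (R : nmodType) (f : nat -> R) m :
  \sum_(t <- iota 0 m) f t = \sum_(t < m) f t.
Proof. by rewrite -(big_mkord xpredT) /index_iota subn0. Qed.

Section NormalForm.
Variables (K : fieldType) (n w : nat) (gam : K).
Hypotheses (n_gt0 : (0 < n)%N) (gamn : gam ^+ n = 1).

Definition evalH (F : idx -> K) (h : Hel K) := \sum_(r <- h) r.1 * F r.2.

(* Reducing the right factor first does not change the product: the binomial
   expansions of (1 - x^w)^m coming from y^(n m) compose by [binsum_add]. *)
Lemma evalH_mulB_nfr F a c :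
  evalH F (mulB n w gam a c) = \sum_(t <- nf n w gam c) t.1 * evalH F (mulB n w gam a t.2).
Proof.
case: a => [[k j] i]; case: c => [[k' j'] i'].
have divJ : ((j + j') %/ n = j' %/ n + (j + j' %% n) %/ n)%N.
  by rewrite {1}(divn_eq j' n) addnCA divnMDl.
have divI : ((i + i') %/ n = i' %/ n + (i + i' %% n) %/ n)%N.
  by rewrite {1}(divn_eq i' n) addnCA divnMDl.
have modJ : ((j + j' %% n) %% n = (j + j') %% n)%N by rewrite modnDmr.
have modI : ((i + i' %% n) %% n = (i + i') %% n)%N by rewrite modnDmr.
have gam_mod : gam ^+ (i * (j' %% n)) = gam ^+ (i * j').
  by rewrite mulnC exprM (expr_mod _ gamn) -exprM mulnC.
pose psi s := (-1) ^+ s * F (k + k' + (w * ((j + j') %/ n))%N + (w * s)%N,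
                             ((j + j') %% n)%N, ((i + i') %% n)%N).
rewrite /nf /evalH /mulB; cbv beta iota zeta.
rewrite !big_map !addn0 !muln0 expr0.
transitivity (gam ^+ (i * j') * binsum ((i + i') %/ n) psi).
  rewrite big_iota0 /binsum mulr_sumr; apply: eq_bigr => t _.
  rewrite /psi /=; ring.
rewrite divI -binsum_add {1}/binsum mulr_sumr big_iota0; apply: eq_bigr => t _.
cbn [fst snd]; rewrite big_map big_iota0 /binsum !mulr_sumr; apply: eq_bigr => u _ /=.
have -> : (k + (k' + 0 + (w * (j' %/ n))%N + (w * t)%N) + (w * ((j + j' %% n) %/ n))%N
            + (w * u)%N, ((j + j' %% n) %% n)%N, ((i + i' %% n) %% n)%N) =
          (k + k' + (w * ((j + j') %/ n))%N + (w * (t + u))%N,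
            ((j + j') %% n)%N, ((i + i') %% n)%N).
  by rewrite divJ modJ modI; congr (_, _, _); rewrite !mulnDr !PoszD; ring.
rewrite /psi gam_mod exprD /=; ring.
Qed.

Lemma evalH_mulH F h h' : evalH F (mulH n w gam h h') =
  \sum_(p <- h) p.1 * \sum_(q <- h') q.1 * evalH F (mulB n w gam p.2 q.2).
Proof.
rewrite /mulH /evalH big_flatten /= big_allpairs_dep.
apply: eq_bigr => p _; rewrite mulr_sumr; apply: eq_bigr => q _.
by rewrite big_map !mulr_sumr; apply: eq_bigr => r _ /=; ring.
Qed.

Lemma evalH_mulH_nf F a c h :
  evalH F (mulH n w gam (mulH n w gam [:: (1, a)] [:: (1, c)]) h) =
  \sum_(t <- nf n w gam c)
     t.1 * evalH F (mulH n w gam (mulH n w gam [:: (1, a)] [:: (1, t.2)]) h).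
Proof.
pose Fh d := \sum_(q <- h) q.1 * evalH F (mulB n w gam d q.2).
have mulH_evalB c' : evalH F (mulH n w gam (mulH n w gam [:: (1, a)] [:: (1, c')]) h) =
                     evalH Fh (mulB n w gam a c').
  rewrite evalH_mulH -/(evalH Fh _) evalH_mulH.
  by rewrite !big_seq1 /= !mul1r.
by rewrite mulH_evalB evalH_mulB_nfr; apply: eq_bigr => t _; rewrite mulH_evalB.
Qed.

End NormalForm.

Section Linear.
Variables (K : fieldType) (V : vectType K).

Lemma iter_linear (f : {linear V -> V}) m : linear (iter m f).
Proof. by elim: m => [|m IH] a u u' //=; rewrite IH linearP. Qed.

HB.instance Definition _ (f : {linear V -> V}) m :=
  GRing.isLinear.Build K V V *:%R (iter m f) (iter_linear f m).

Lemma iter_eigen (f : {linear V -> V}) (c : K) u m :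
  f u = c *: u -> iter m f u = c ^+ m *: u.
Proof.
move=> fu; elim: m => [|m IH]; first by rewrite scale1r.
by rewrite iterS IH linearZ_LR fu scalerA exprSr.
Qed.

Lemma linear_span_stable (f : {linear V -> V}) (S : seq V) (W : {vspace V}) :
  {in S, forall x, f x \in W} -> forall u, u \in <<S>>%VS -> f u \in W.
Proof.
move=> fS u uS; rewrite (coord_span (X := in_tuple S) uS) linear_sum.
apply: memv_suml => i _.
by rewrite linearZ_LR; apply/memvZ/fS/mem_nth.
Qed.

Section Eigenvectors.
Variable f : {linear V -> V}.

Lemma eigenvector_span_eq0 (s : seq (K * V)) u mu :
  {in s, forall x, f x.2 = x.1 *: x.2} ->
  u \in <<map snd s>>%VS -> f u = mu *: u -> mu \notin map fst s -> u = 0.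
Proof.
elim: s u mu => [|[lam e] s IH] u mu eig_s; first by rewrite span_nil memv0 => /eqP.
rewrite /= span_cons => /memv_addP [_ /vlineP [c ->] [u' u's ->]] fu.
rewrite in_cons negb_or => /andP [mu_lam mu_s].
have eig_s' : {in s, forall x, f x.2 = x.1 *: x.2}.
  by move=> x xs; apply: eig_s; rewrite in_cons xs orbT.
have fe : f e = lam *: e by apply: (eig_s (lam, e)); rewrite in_cons eqxx.
have f_span : {in s, forall x, f x.2 \in <<map snd s>>%VS}.
  by move=> x xs; rewrite eig_s' //; apply/memvZ/memv_span/map_f.
pose z := (mu - lam) *: (c *: e + u').
have z_span : z \in <<map snd s>>%VS.
  have -> : z = f u' - lam *: u'.
    rewrite /z scalerBl -fu linearD linearZ_LR fe scalerDr !scalerA [lam * c]mulrC.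
    by rewrite opprD addrACA subrr add0r.
  apply: memvB; last exact: memvZ.
  apply: (linear_span_stable _ u's) => _ /mapP [x xs ->].
  exact: f_span.
have fz : f z = mu *: z by rewrite /z linearZ_LR fu !scalerA mulrC.
move/eqP: (IH z mu eig_s' z_span fz mu_s).
by rewrite scaler_eq0 subr_eq0 (negPf mu_lam) => /eqP.
Qed.

Lemma free_eigenvectors (s : seq (K * V)) : uniq (map fst s) ->
  {in s, forall x, f x.2 = x.1 *: x.2 /\ x.2 != 0} -> free (map snd s).
Proof.
elim: s => [|[lam e] s IH]; first by rewrite nil_free.
rewrite /= => /andP [lam_s uniq_s] eig_s.
have eig_s' : {in s, forall x, f x.2 = x.1 *: x.2 /\ x.2 != 0}.
  by move=> x xs; apply: eig_s; rewrite in_cons xs orbT.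
rewrite free_cons (IH uniq_s eig_s') andbT.
have [fe e0] : f e = lam *: e /\ e != 0 by apply: (eig_s (lam, e)); rewrite in_cons eqxx.
apply/negP => e_s.
by move: e0; rewrite (eigenvector_span_eq0 (fun x xs => (eig_s' x xs).1) e_s fe lam_s) eqxx.
Qed.

End Eigenvectors.
End Linear.

Section Coaction.
Variables (K : fieldType) (n w : nat) (gam : K).
Hypotheses (n_gt0 : (0 < n)%N) (gamn : gam ^+ n = 1).
Variables (V : vectType K) (X Xi G Y : {linear V -> V}) (delta : V -> seq (idx * V)).

Lemma rhoB_linear b : linear (rhoB X Xi G Y b).
Proof. by case: b => [[[m|m] j] i] a u u' /=; rewrite !linearP. Qed.

HB.instance Definition _ b :=
  GRing.isLinear.Build K V V *:%R (rhoB X Xi G Y b) (rhoB_linear b).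

Definition nf_coef (b d : idx) : K := \sum_(r <- nf n w gam d | r.2 == b) r.1.

Lemma tcE (t : seq (idx * V)) b : tc n w gam t b = \sum_(e <- t) nf_coef b e.1 *: e.2.
Proof. by apply: eq_bigr => e _; rewrite /nf_coef scaler_suml. Qed.

Definition nf_support (t : seq (idx * V)) : seq idx :=
  undup (flatten [seq [seq r.2 | r <- nf n w gam s.1] | s <- t]).

Lemma sum_nf_tc (F : idx -> K) (t : seq (idx * V)) :
  \sum_(s <- t) \sum_(r <- nf n w gam s.1) (r.1 * F r.2) *: s.2 =
  \sum_(b <- nf_support t) F b *: tc n w gam t b.
Proof.
under [RHS]eq_bigr do rewrite scaler_sumr.
rewrite exchange_big /=; apply: eq_big_seq => s st.
under [RHS]eq_bigr do rewrite scaler_sumr big_mkcond.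
rewrite exchange_big /=; apply: eq_big_seq => r r_nf.
have r_supp : r.2 \in nf_support t.
  by rewrite mem_undup; apply/flatten_mapP; exists s => //; apply: map_f.
rewrite (bigD1_seq r.2) ?undup_uniq //= eqxx big1 ?addr0; first by rewrite scalerA mulrC.
by move=> b /negPf; rewrite eq_sym => ->.
Qed.

(* Each coefficient of h_(1) u_(-1) S(h_(3)) (x) h_(2).u_(0) is h_(2) applied to
   a combination of the u_(0), which regroup into the coefficients of delta u
   because the product only depends on the normal form of u_(-1). *)
Lemma tc_YD_rhs_in (U : {vspace V}) h u b :
  (forall b' u', u' \in U -> rhoB X Xi G Y b' u' \in U) ->
  (forall b', tc n w gam (delta u) b' \in U) ->
  tc n w gam (YD_rhs n w gam X Xi G Y delta h u) b \in U.
Proof.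
move=> rhoU coef_u.
rewrite tcE /YD_rhs big_flatten /= big_allpairs_dep.
apply: memv_suml => q _.
pose R : {linear V -> V} := rhoB X Xi G Y q.2.1.2.
pose Phi c := evalH (nf_coef b)
  (mulH n w gam (mulH n w gam [:: (1, q.2.1.1)] [:: (1, c)]) (SB n w gam q.2.2)).
have -> : \sum_(s <- delta u)
     \sum_(e <- [seq (r.2, (q.1 * r.1) *: R s.2)
                   | r <- mulH n w gam (mulH n w gam [:: (1, q.2.1.1)] [:: (1, s.1)])
                            (SB n w gam q.2.2)]) nf_coef b e.1 *: e.2
   = q.1 *: R (\sum_(s <- delta u) Phi s.1 *: s.2).
  rewrite linear_sum scaler_sumr; apply: eq_bigr => s _.
  rewrite big_map linearZ_LR scalerA.
  under eq_bigr do rewrite /= scalerA.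
  rewrite -scaler_suml /Phi /evalH mulr_sumr; congr (_ *: _).
  by apply: eq_bigr => r _; rewrite mulrC mulrA.
apply/memvZ/rhoU.
under eq_bigr do rewrite /Phi (evalH_mulH_nf _ n_gt0 gamn) scaler_suml.
by rewrite (sum_nf_tc Phi); apply: memv_suml => b' _; apply: memvZ.
Qed.

End Coaction.

Section StandardElement.
Variables (K : fieldType) (n w : nat) (gam : K).
Hypotheses (n_gt0 : (0 < n)%N) (gam_prim : n.-primitive_root gam).
Variables (V : vectType K) (X Xi G Y : {linear V -> V}) (delta : V -> seq (idx * V)).
Hypotheses (YD : is_YD n w gam X Xi G Y delta) (simple : YD_simple n w gam X Xi G Y delta).
Variables (v : V) (alpha beta : K) (k : int) (j : nat).
Hypothesis std : standard n w gam X Xi G Y delta v alpha beta k j.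

Local Notation Yv l := (iter l Y v).

Let Hmod : is_Hmodule n w gam X Xi G Y. Proof. by case: YD. Qed.
Let v_neq0 : v != 0. Proof. by case: std => -[]. Qed.
Let alpha_neq0 : alpha != 0. Proof. by case: std => -[_ []]. Qed.
Let beta_neq0 : beta != 0. Proof. by case: std => -[_ [_ []]]. Qed.
Let Xv : X v = alpha *: v. Proof. by case: std. Qed.
Let Gv : G v = beta *: v. Proof. by case: std. Qed.

Lemma alpha_w_beta_n : alpha ^+ w = beta ^+ n.
Proof.
have [_ [_ [_ [_ [_ [_ xw_gn]]]]]] := Hmod.
move/eqP: (xw_gn v); rewrite (iter_eigen _ Xv) (iter_eigen _ Gv).
by rewrite -subr_eq0 -scalerBl scaler_eq0 (negPf v_neq0) orbF subr_eq0 => /eqP.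
Qed.

Lemma iterY_n : Yv n = (1 - alpha ^+ w) *: v.
Proof.
have [_ [_ [_ [_ [_ [yn _]]]]]] := Hmod.
by rewrite yn (iter_eigen _ Xv) scalerBl scale1r.
Qed.

Lemma X_iterY l : X (Yv l) = alpha *: Yv l.
Proof.
have [_ [_ [_ [XY _]]]] := Hmod.
by elim: l => [|l IH] //=; rewrite XY IH linearZ_LR.
Qed.

Lemma Xi_iterY l : Xi (Yv l) = alpha^-1 *: Yv l.
Proof.
have [_ [XiX _]] := Hmod.
have X_inv : X (alpha^-1 *: Yv l) = Yv l.
  by rewrite linearZ_LR X_iterY scalerA mulVf // scale1r.
by rewrite -{1}X_inv XiX.
Qed.

Lemma G_iterY l : G (Yv l) = (beta / gam ^+ l) *: Yv l.
Proof.
have [_ [_ [_ [_ [YG _]]]]] := Hmod.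
have gam_neq0 : gam != 0 by rewrite (prim_root_eq0 gam_prim) -lt0n.
have GY u : G (Y u) = gam^-1 *: Y (G u) by rewrite YG scalerA mulVf // scale1r.
elim: l => [|l IH]; first by rewrite expr0 invr1 mulr1.
by rewrite iterS GY IH linearZ_LR scalerA exprS invfM mulrCA.
Qed.

Definition Yorbit := <<mkseq (fun l => Yv l) n>>%VS.

Lemma iterY_in_orbit l : (l < n)%N -> Yv l \in Yorbit.
Proof. by move=> ln; apply/memv_span/mapP; exists l; rewrite ?mem_iota. Qed.

Lemma orbit_stable (f : {linear V -> V}) :
  (forall l, (l < n)%N -> f (Yv l) \in Yorbit) -> forall u, u \in Yorbit -> f u \in Yorbit.
Proof.
move=> f_orbit; apply: linear_span_stable => x /mapP [l].
by rewrite mem_iota => /andP [_ ln] ->; apply: f_orbit.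
Qed.

Lemma rhoB_orbit b u : u \in Yorbit -> rhoB X Xi G Y b u \in Yorbit.
Proof.
have stable (f : {linear V -> V}) c :
    (forall l, f (Yv l) = c l *: Yv l) -> forall u, u \in Yorbit -> f u \in Yorbit.
  move=> f_eig; apply: orbit_stable => l ln.
  by rewrite f_eig; apply/memvZ/iterY_in_orbit.
have Y_orbit u' : u' \in Yorbit -> Y u' \in Yorbit.
  apply: (orbit_stable (f := Y)) => l ln; rewrite -iterS.
  case: (ltnP l.+1 n) => [|nl]; first exact: iterY_in_orbit.
  by rewrite (_ : l.+1 = n) ?iterY_n; [apply/memvZ/(iterY_in_orbit n_gt0) | lia].
have X_orbit := stable X _ X_iterY.
have Xi_orbit := stable Xi _ Xi_iterY.
have G_orbit := stable G _ G_iterY.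
have iter_orbit (f : V -> V) m u' : (forall x, x \in Yorbit -> f x \in Yorbit) ->
    u' \in Yorbit -> iter m f u' \in Yorbit.
  by move=> f_orbit u'_orbit; elim: m => [|m IH] //=; apply: f_orbit.
by case: b => [[[m|m] j'] i] uU; do 3!apply: (iter_orbit) => //.
Qed.

Definition coaction_coef b u := tc n w gam (delta u) b.

Let coaction_coef_linear b : linear (coaction_coef b).
Proof. by case: YD => _ [tc_lin _ _] _ a u u'; apply: tc_lin. Qed.

HB.instance Definition _ b :=
  GRing.isLinear.Build K V V *:%R (coaction_coef b) (coaction_coef_linear b).

Lemma coaction_orbit u b : u \in Yorbit -> tc n w gam (delta u) b \in Yorbit.
Proof.
have [_ _ YD_compat] := YD.
have gamn : gam ^+ n = 1 := prim_expr_order gam_prim.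
apply: (orbit_stable (f := coaction_coef b)) => l _.
elim: l b => [|l IH] b /=; rewrite /coaction_coef.
  by case: std => _ _ _ ->; case: ifP => _; [apply: (iterY_in_orbit n_gt0) | apply: mem0v].
have -> : Y (Yv l) = rhoH X Xi G Y [:: (1, (0%:Z, 0%N, 1%N))] (Yv l).
  by rewrite /rhoH big_seq1 scale1r.
by rewrite YD_compat; apply: tc_YD_rhs_in => // b' u'; apply: rhoB_orbit.
Qed.

Lemma orbit_full : Yorbit = fullv.
Proof.
case: (simple rhoB_orbit coaction_orbit) => // orbit0.
by move: (iterY_in_orbit n_gt0); rewrite orbit0 memv0 (negPf v_neq0).
Qed.

Lemma dimv_le_n : (\dim {:V} <= n)%N.
Proof. by rewrite -orbit_full (leq_trans (dim_span _)) ?size_mkseq. Qed.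

Lemma orbit_nonzero_le_dimv L : (L <= n)%N -> (forall l, (l < L)%N -> Yv l != 0) ->
  (L <= \dim {:V})%N.
Proof.
move=> Ln Yv_neq0.
pose s := [seq (beta / gam ^+ l, Yv l) | l <- iota 0 L].
have free_s : free (map snd s).
  apply: (free_eigenvectors (f := G)).
    rewrite -map_comp map_inj_in_uniq ?iota_uniq // => l1 l2.
    rewrite !mem_iota !add0n => /andP [_ l1L] /andP [_ l2L] /= /(mulfI beta_neq0).
    by move/invr_inj/eqP; rewrite (eq_prim_root_expr gam_prim) !modn_small; lia.
  move=> _ /mapP [l lL ->] /=; split; first exact: G_iterY.
  by apply: Yv_neq0; move: lL; rewrite mem_iota.
have <- : \dim <<map snd s>> = L.
  by move: free_s; rewrite /free => /eqP ->; rewrite !size_map size_iota.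
exact/dimvS/subvf.
Qed.

Lemma iterY_dimv_eq0 : alpha ^+ w = 1 -> Yv (\dim {:V}) = 0.
Proof.
move=> alpha_w1.
have Yn0 : Yv n == 0 by rewrite iterY_n alpha_w1 subrr scale0r.
have exY0 : exists l, Yv l == 0 by exists n.
case: (ex_minnP exY0) => m /eqP Ym0 m_min.
have m_le : (m <= \dim {:V})%N.
  apply: orbit_nonzero_le_dimv; first exact: m_min Yn0.
  by move=> l lm; apply/negP => /m_min; lia.
by rewrite -(subnK m_le) iterD Ym0 linear0.
Qed.

Lemma iterY_n_neq0 : alpha ^+ w != 1 -> Yv n != 0.
Proof. by rewrite iterY_n scaler_eq0 (negPf v_neq0) orbF subr_eq0 eq_sym. Qed.

Lemma dimv_eq_n : alpha ^+ w != 1 -> \dim {:V} = n.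
Proof.
move=> /iterY_n_neq0 Yn_neq0; apply/eqP; rewrite eqn_leq dimv_le_n.
apply: orbit_nonzero_le_dimv => // l ln; apply: contra_neq Yn_neq0 => Yl0.
by rewrite -(subnK (ltnW ln)) iterD Yl0 linear0.
Qed.

End StandardElement.

Theorem lemma3p6 (K : closedFieldType) (char0 : [pchar K] =i pred0)
  (n w : nat) (n_gt0 : (0 < n)%N) (w_gt0 : (0 < w)%N)
  (gam : K) (gam_prim : n.-primitive_root gam)
  (V : vectType K) (p : nat) (dimV : \dim {: V} = p.+1)
  (X Xi G Y : {linear V -> V}) (delta : V -> seq (idx * V))
  (YD : is_YD n w gam X Xi G Y delta)
  (simple : YD_simple n w gam X Xi G Y delta)
  (v : V) (alpha beta : K) (k : int) (j : nat)
  (std : standard n w gam X Xi G Y delta v alpha beta k j) :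
  [/\ (p.+1 <= n)%N,
      ((p.+1 < n)%N -> iter p.+1 Y v = 0),
      (iter p.+1 Y v = 0 <-> alpha ^+ w = 1 /\ beta ^+ n = 1)
    & (iter p.+1 Y v != 0 <-> alpha ^+ w = beta ^+ n /\ beta ^+ n != 1)].
Proof.
have dimv_le := dimv_le_n n_gt0 gam_prim YD simple std.
rewrite -dimV -(alpha_w_beta_n YD std).
have [alpha_w1 | alpha_w_neq1] := eqVneq (alpha ^+ w) 1.
  have Y0 := iterY_dimv_eq0 n_gt0 gam_prim YD std alpha_w1.
  by rewrite Y0 alpha_w1 eqxx; split=> //; split=> // -[].
have Yn_neq0 := iterY_n_neq0 YD std alpha_w_neq1.
rewrite (dimv_eq_n n_gt0 gam_prim YD simple std alpha_w_neq1) ltnn.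
by split=> //; split=> // [/eqP | [/eqP]]; rewrite ?(negPf Yn_neq0) ?(negPf alpha_w_neq1).
Qed.
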